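(* Let $\mathbf a=(a_1,\dots,a_q)$ be a graceful permutation of length $q$. Suppose $\mathbf a$ has two adjacent entries $x$ and $y$ (in either order) with $x<y<2(y-x)$, and put $p=2(y-x)$. Then there is a graceful permutation of length $2p+q$ with first element $a_1+p$ and last element $a_q+p$.
   Context: A graceful permutation of length $n$ is an arrangement $(a_1,\dots,a_n)$ of the integers $\{0,1,\dots,n-1\}$ whose absolute differences $|a_{i+1}-a_i|$ ($1\le i\le n-1$) are exactly $\{1,\dots,n-1\}$. *)

From mathcomp Require Import all_boot.
Set Implicit Arguments. Unset Strict Implicit. Unset Printing Implicit Defensive.

Definition absdiff (m n : nat) : nat := (m - n) + (n - m).

Definition diffs (s : seq nat) : seq nat :=
  pairmap absdiff (head 0 s) (behead s).

Definition graceful (n : nat) (s : seq nat) : Prop :=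
  perm_eq s (iota 0 n) /\ perm_eq (diffs s) (iota 1 n.-1).

From mathcomp Require Import all_boot zify.

Set Implicit Arguments.
Unset Strict Implicit.
Unset Printing Implicit Defensive.

(* Cut [a] between the adjacent entries [x] and [y], lift every
   entry by [p] and insert a block [W] of the [2p] missing values
   [0, p) U [p + q, 2p + q) whose internal differences are exactly
   (q, 2p + q) and whose two junction differences are [y - x] (replacing the
   removed edge) and [q].  Such a block comes from a graceful permutation [w]
   of [0, 2p) that starts at [y], ends at [y + p] and alternates between the
   halves [0, p) and [p, 2p): lifting the upper half by [q] then raises every
   difference by exactly [q].  Alternating graceful permutations of [0, 2m)
   from [c] to [c + m] exist for every [c < m], by induction on [m]: the case
   [m = 2c + 1] is explicit, the case [m <= 2c] prepends a zigzag to a lifted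
   solution for [(c, 2c - m)], and the case [m > 2c + 1] is the reverse
   complement [v |-> 2m - 1 - v] of the solution for [m - 1 - c]. *)

Lemma perm_iota_cover (s : seq nat) a n : size s = n ->
  (forall v, a <= v < a + n -> v \in s) -> perm_eq s (iota a n).
Proof.
move=> size_s cover.
have sub : {subset iota a n <= s} by move=> v; rewrite mem_iota => /cover.
have le_size : size s <= size (iota a n) by rewrite size_iota size_s.
have [_ eq_s] := uniq_min_size (iota_uniq a n) sub le_size.
have uniq_s : uniq s by rewrite -(eq_uniq _ eq_s) ?iota_uniq ?size_iota.
by apply: uniq_perm uniq_s (iota_uniq a n) _ => v; rewrite eq_s.
Qed.

Lemma head_rev (T : Type) (x : T) s : head x (rev s) = last x s.
Proof. by case/lastP: s => // s y; rewrite rev_rcons last_rcons. Qed.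

Lemma last_rev (T : Type) (x : T) s : last x (rev s) = head x s.
Proof. by case: s => // y s; rewrite rev_cons last_rcons. Qed.

Lemma head_cat_nonnil (T : eqType) (x : T) s1 s2 :
  s1 != [::] -> head x (s1 ++ s2) = head x s1.
Proof. by case: s1. Qed.

Lemma last_cat_nonnil (T : eqType) (x : T) s1 s2 :
  s2 != [::] -> last x (s1 ++ s2) = last x s2.
Proof. by case: s2 => // y s2 _; rewrite last_cat. Qed.

Lemma take_nonnil (T : eqType) (a : seq T) n : a != [::] -> take n.+1 a != [::].
Proof. by case: a. Qed.

Lemma drop_nonnil (T : eqType) (a : seq T) n : n < size a -> drop n a != [::].
Proof. by rewrite -size_eq0 size_drop subn_eq0 -ltnNge. Qed.

Lemma map_nonnil (f : nat -> nat) s : s != [::] -> map f s != [::].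
Proof. by case: s. Qed.

Lemma head_map_nonnil (f : nat -> nat) s : s != [::] -> head 0 (map f s) = f (head 0 s).
Proof. by case: s. Qed.

Lemma last_map_nonnil (f : nat -> nat) s : s != [::] -> last 0 (map f s) = f (last 0 s).
Proof. by case: s => // x s _; rewrite /= last_map. Qed.

Definition pairs (R : Type) (F : nat -> nat -> R) (s : seq nat) : seq R :=
  pairmap F (head 0 s) (behead s).

Section Pairs.
Variables (R : Type) (F G : nat -> nat -> R).

Lemma size_pairs s : size (pairs F s) = (size s).-1.
Proof. by case: s => //= x s; rewrite size_pairmap. Qed.

Lemma pairs_cat s1 s2 : s1 != [::] -> s2 != [::] ->
  pairs F (s1 ++ s2) = pairs F s1 ++ F (last 0 s1) (head 0 s2) :: pairs F s2.
Proof. by case: s1 => // x s1 _; case: s2 => // y s2 _; rewrite /pairs /= pairmap_cat. Qed.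

Lemma pairs_rev s : (forall u v, F u v = F v u) -> pairs F (rev s) = rev (pairs F s).
Proof.
move=> FC; elim: s => // x [|y s] IHs //.
rewrite rev_cons -cats1 pairs_cat //; last by rewrite rev_cons; case: (rev s).
by rewrite IHs /= !rev_cons -!cats1 /= last_cat /= FC.
Qed.

Lemma eq_in_pairs s : {in s &, F =2 G} -> pairs F s = pairs G s.
Proof.
case: s => // x s; rewrite /pairs /=.
elim: s x => //= y s IHs x FG.
rewrite FG ?inE ?eqxx ?orbT //; congr (_ :: _); apply: IHs => u v u_s v_s.
by apply: FG; rewrite inE ?u_s ?v_s orbT.
Qed.

Lemma eq_pairs_sorted (e : rel nat) s :
  sorted e s -> (forall u v, e u v -> F u v = G u v) -> pairs F s = pairs G s.
Proof.
case: s => // x s; rewrite /pairs /=.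
by elim: s x => //= y s IHs x /andP[exy e_s] FG; rewrite FG // IHs.
Qed.

End Pairs.

Lemma pairs_map R (F : nat -> nat -> R) f s :
  pairs F (map f s) = pairs (fun u v => F (f u) (f v)) s.
Proof. by case: s => // x s; rewrite /pairs /=; elim: s x => //= y s ->. Qed.

Lemma map_pairs R R' (h : R -> R') F s :
  map h (pairs F s) = pairs (fun u v => h (F u v)) s.
Proof. by case: s => // x s; rewrite /pairs /=; elim: s x => //= y s ->. Qed.

Lemma diffsE : diffs =1 pairs absdiff.
Proof. by []. Qed.

Lemma size_diffs s : size (diffs s) = (size s).-1.
Proof. exact: size_pairs. Qed.

Lemma mem_diffs_cat e s1 s2 : s1 != [::] -> s2 != [::] ->
  (e \in diffs (s1 ++ s2)) =
  [|| e \in diffs s1, e == absdiff (last 0 s1) (head 0 s2) | e \in diffs s2].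
Proof. by move=> s1_nil s2_nil; rewrite diffsE pairs_cat // mem_cat inE. Qed.

Lemma diffs_rev s : diffs (rev s) = rev (diffs s).
Proof. by apply: pairs_rev => u v; rewrite /absdiff addnC. Qed.

Lemma diffs_addn d s : diffs (map (addn d) s) = diffs s.
Proof.
by rewrite !diffsE pairs_map; apply: eq_in_pairs => u v _ _; rewrite /absdiff; lia.
Qed.

Lemma size_graceful n s : graceful n s -> size s = n.
Proof. by case=> /perm_size ->; rewrite size_iota. Qed.

Lemma graceful_nonnil n s : 0 < n -> graceful n s -> s != [::].
Proof. by move=> n_gt0 /size_graceful size_s; rewrite -size_eq0 size_s -lt0n. Qed.

Lemma mem_graceful n s v : graceful n s -> (v \in s) = (v < n).
Proof. by case=> /perm_mem -> _; rewrite mem_iota. Qed.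

Lemma mem_diffs_graceful n s e : graceful n s -> (e \in diffs s) = (0 < e < n).
Proof. by case=> _ /perm_mem ->; rewrite mem_iota; lia. Qed.

Lemma graceful_cover n s : size s = n ->
  (forall v, v < n -> v \in s) -> (forall e, 0 < e < n -> e \in diffs s) ->
  graceful n s.
Proof.
move=> size_s cover_s cover_d; split; apply: perm_iota_cover.
- by [].
- by move=> v /cover_s.
- by rewrite size_diffs size_s.
- by move=> e he; apply: cover_d; lia.
Qed.

Lemma graceful_rev n s : graceful n s -> graceful n (rev s).
Proof. by case=> ps pd; split; rewrite ?diffs_rev perm_rev. Qed.

Lemma graceful_compl n s : graceful n s -> graceful n (map (subn n.-1) s).
Proof.
move=> gs; have s_lt := mem_graceful _ gs.
have diffs_compl : diffs (map (subn n.-1) s) = diffs s.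
  rewrite !diffsE pairs_map; apply: eq_in_pairs => u v.
  by rewrite !s_lt /absdiff => u_lt v_lt; lia.
apply: graceful_cover; first by rewrite size_map (size_graceful gs).
  by move=> v v_lt; apply/mapP; exists (n.-1 - v); rewrite ?s_lt; lia.
by move=> e; rewrite diffs_compl (mem_diffs_graceful _ gs).
Qed.

Definition alternating m (s : seq nat) := sorted (fun u v => (u < m) != (v < m)) s.

Lemma alternating_cat m s1 s2 : s1 != [::] -> s2 != [::] ->
  alternating m (s1 ++ s2) =
  [&& alternating m s1, (last 0 s1 < m) != (head 0 s2 < m) & alternating m s2].
Proof.
by case: s1 => // x s1 _; case: s2 => // y s2 _; rewrite /alternating /= cat_path.
Qed.

Definition shift_high m d v := if v < m then v else v + d.

Lemma alternating_shift_high m c d s : c <= m <= c + d ->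
  alternating m (map (shift_high c d) s) = alternating c s.
Proof.
move=> m_range; rewrite /alternating sorted_map.
by apply: eq_sorted => u v; rewrite /= /shift_high; case: ifP; case: ifP; lia.
Qed.

Lemma diffs_shift_high m d s : alternating m s ->
  diffs (map (shift_high m d) s) = map (addn d) (diffs s).
Proof.
move=> alt_s; rewrite !diffsE pairs_map map_pairs.
apply: (eq_pairs_sorted alt_s) => u v.
by rewrite /shift_high /absdiff; case: ifP; case: ifP; lia.
Qed.

Lemma mem_shift_high m d s v : graceful (2 * m) s ->
  (v \in map (shift_high m d) s) = (v < m) || (m + d <= v < 2 * m + d).
Proof.
move=> gs; apply/mapP/idP => [[u u_s ->] | v_range].
  by move: u_s; rewrite (mem_graceful _ gs) /shift_high; case: ifP; lia.
exists (if v < m then v else v - d); first by rewrite (mem_graceful _ gs); case: ifP; lia.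
by rewrite /shift_high; case: ifP; case: ifP; lia.
Qed.

Lemma mem_diffs_shift_high m d s e : graceful (2 * m) s -> alternating m s ->
  (e \in diffs (map (shift_high m d) s)) = (d < e < 2 * m + d).
Proof.
move=> gs alt_s; rewrite diffs_shift_high //; apply/mapP/idP => [[e' e's ->] | e_range].
  by move: e's; rewrite (mem_diffs_graceful _ gs); lia.
by exists (e - d); rewrite ?(mem_diffs_graceful _ gs); lia.
Qed.

Fixpoint zigzag a b k := if k is k'.+1 then a :: b :: zigzag a.+1 b.-1 k' else [::].

Lemma size_zigzag a b k : size (zigzag a b k) = k.*2.
Proof. by elim: k a b => //= k IHk a b; rewrite IHk doubleS. Qed.

Lemma mem_zigzag a b k v : k <= b.+1 ->
  (v \in zigzag a b k) = (a <= v < a + k) || (b < v + k <= b + k).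
Proof.
elim: k a b => [|k IHk] a b k_le /=; first by rewrite in_nil; lia.
by rewrite !inE IHk; [apply/idP/idP; lia | lia].
Qed.

Lemma last_zigzag x a b k : last x (zigzag a b k.+1) = b - k.
Proof.
elim: k x a b => [|k IHk] x a b; first by rewrite subn0.
by rewrite [zigzag _ _ _]/= last_cons last_cons IHk; lia.
Qed.

Lemma mem_diffs_zigzag a b k e : a + k.*2 < b ->
  (e \in diffs (zigzag a b k.+1)) = (b - a - k.*2 <= e <= b - a).
Proof.
elim: k a b => [|k IHk] a b k_lt.
  by rewrite /diffs /= inE /absdiff; apply/idP/idP; lia.
have -> : diffs (zigzag a b k.+2) =
  absdiff a b :: absdiff b a.+1 :: diffs (zigzag a.+1 b.-1 k.+1) by [].
by rewrite 2!in_cons IHk /absdiff; [apply/idP/idP; lia | lia].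
Qed.

Lemma alternating_zigzag m a b k : a + k <= m -> m + k <= b.+1 ->
  alternating m (zigzag a b k).
Proof.
case: k => // k; elim: k a b => [|k IHk] a b a_le b_ge.
  by rewrite /alternating /=; lia.
have := IHk a.+1 b.-1 ltac:(lia) ltac:(lia); rewrite /alternating /= => ->.
by rewrite andbT; lia.
Qed.

Definition alt_graceful m c w :=
  [/\ graceful (2 * m) w, head 0 w = c, last 0 w = c + m & alternating m w].

(* Differences: [2c, ..., 2] along the first zigzag, then [1], [2c + 1],
   [4c + 1], then [4c, ..., 2c + 2] along the second zigzag. *)
Lemma alt_graceful_base c : alt_graceful (2 * c + 1) c
  (zigzag c (3 * c) c ++ [:: 2 * c; 4 * c + 1] ++ zigzag 0 (4 * c) c).
Proof.
case: c => [|k]; first by do !split.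
have z1 : zigzag k.+1 (3 * k.+1) k.+1 != [::] by [].
have z2 : [:: 2 * k.+1; 4 * k.+1 + 1] ++ zigzag 0 (4 * k.+1) k.+1 != [::] by [].
split.
- apply: graceful_cover.
  + by rewrite !size_cat !size_zigzag /=; lia.
  + by move=> v v_lt; rewrite !mem_cat !mem_zigzag ?inE; lia.
  move=> e e_range; rewrite !mem_diffs_cat // !mem_diffs_zigzag ?last_zigzag /=; try lia.
  by rewrite inE /absdiff /=; lia.
- by [].
- by rewrite !last_cat last_zigzag; lia.
by rewrite !alternating_cat // !alternating_zigzag ?last_zigzag /=; lia.
Qed.

(* With [t = m - c], the zigzag uses [c, m) and [m, m + t) with differences
   [2t - 1, ..., 1] and ends at [m]; the junction [m -> 2c - m] has
   difference [2t], and the lifted [w] supplies [2t + 1, ..., 2m - 1]. *)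
Lemma alt_graceful_step m c w : c < m <= 2 * c ->
  alt_graceful c (2 * c - m) w ->
  alt_graceful m c
    (zigzag c (2 * m - c - 1) (m - c) ++ map (shift_high c (2 * (m - c))) w).
Proof.
move=> m_range [gw hw lw aw].
have w_nil : w != [::] by apply: graceful_nonnil gw; lia.
case t_eq: (m - c) => [|t]; first lia.
have sw_nil := map_nonnil (shift_high c (2 * t.+1)) w_nil.
have z_last : last 0 (zigzag c (2 * m - c - 1) t.+1) = m by rewrite last_zigzag; lia.
split.
- apply: graceful_cover.
  + by rewrite size_cat size_zigzag size_map (size_graceful gw); lia.
  + by move=> v v_lt; rewrite mem_cat mem_zigzag ?(mem_shift_high _ _ gw); lia.
  move=> e e_range.
  rewrite mem_diffs_cat // z_last head_map_nonnil // hw (mem_diffs_shift_high _ _ gw aw).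
  by rewrite mem_diffs_zigzag /shift_high /absdiff; [case: ifP; lia | lia].
- by [].
- by rewrite last_cat_nonnil // last_map_nonnil // lw /shift_high; case: ifP; lia.
rewrite alternating_cat // z_last head_map_nonnil // hw alternating_shift_high; last lia.
by rewrite aw alternating_zigzag /shift_high; [case: ifP; lia | lia | lia].
Qed.

Lemma alt_graceful_rev_compl m c w : c < m -> alt_graceful m c w ->
  alt_graceful m (m.-1 - c) (map (subn (2 * m).-1) (rev w)).
Proof.
move=> c_lt [gw hw lw aw].
have rw_nil : rev w != [::] by apply: graceful_nonnil (graceful_rev gw); lia.
split.
- exact/graceful_compl/graceful_rev.
- by rewrite head_map_nonnil // head_rev lw; lia.
- by rewrite last_map_nonnil // last_rev hw; lia.
rewrite /alternating sorted_map rev_sorted; apply: sub_in_sorted (allss w) aw.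
by move=> u v; rewrite !(mem_graceful _ gw) /=; lia.
Qed.

Lemma alt_graceful_exists m c : c < m -> exists w, alt_graceful m c w.
Proof.
elim/ltn_ind: m c => m IHm c c_lt.
wlog m_le : c c_lt / m <= 2 * c + 1.
  move=> small_m; case: (leqP m (2 * c + 1)) => [|m_gt]; first exact: small_m.
  have [w hw] := small_m (m.-1 - c) ltac:(lia) ltac:(lia).
  have -> : c = m.-1 - (m.-1 - c) by lia.
  by eexists; apply: alt_graceful_rev_compl hw; lia.
case: (ltnP (2 * c) m) => m_range.
  have -> : m = 2 * c + 1 by lia.
  by eexists; apply: alt_graceful_base.
have [w hw] := IHm c c_lt (2 * c - m) ltac:(lia).
by eexists; apply: alt_graceful_step hw; lia.
Qed.

Definition splice p i a W :=
  map (addn p) (take i.+1 a) ++ W ++ map (addn p) (drop i.+1 a).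

Lemma head_splice p i a W : a != [::] -> head 0 (splice p i a W) = p + head 0 a.
Proof. by case: a. Qed.

Lemma last_splice p i a W : i.+1 < size a -> last 0 (splice p i a W) = p + last 0 a.
Proof.
move=> i_lt; have drop_a := drop_nonnil i_lt.
rewrite /splice catA last_cat_nonnil ?map_nonnil // last_map_nonnil //.
by rewrite -[in RHS](cat_take_drop i.+1 a) last_cat_nonnil.
Qed.

Lemma mem_splice p i a W v :
  (v \in splice p i a W) = (v \in W) || (p <= v) && (v - p \in a).
Proof.
rewrite /splice !mem_cat -[in RHS](cat_take_drop i.+1 a) mem_cat.
case: (leqP p v) => [p_le | p_gt].
  have -> : v = p + (v - p) by lia.
  by rewrite !(mem_map (@addnI p)) addKn orbCA.
have low_v s : v \in map (addn p) s = false by apply/mapP => -[u _]; lia.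
by rewrite !low_v /= orbF.
Qed.

Lemma mem_diffs_splice p i a W e : i.+1 < size a -> W != [::] ->
  absdiff (p + nth 0 a i) (head 0 W) = absdiff (nth 0 a i) (nth 0 a i.+1) ->
  (e \in diffs (splice p i a W)) =
  [|| e \in diffs a, e \in diffs W | e == absdiff (last 0 W) (p + nth 0 a i.+1)].
Proof.
move=> i_lt W_nil junction.
have take_a : take i.+1 a != [::] by apply: take_nonnil; apply: contraTneq i_lt => ->.
have drop_a := drop_nonnil i_lt.
have last_take : last 0 (take i.+1 a) = nth 0 a i.
  by rewrite -nth_last size_takel ?nth_take //; lia.
have head_drop : head 0 (drop i.+1 a) = nth 0 a i.+1 by rewrite -nth0 nth_drop addn0.
have W_drop : W ++ map (addn p) (drop i.+1 a) != [::] by case: W W_nil junction.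
have -> : (e \in diffs a) = [|| e \in diffs (take i.+1 a),
    e == absdiff (nth 0 a i) (nth 0 a i.+1) | e \in diffs (drop i.+1 a)].
  by rewrite -{1}(cat_take_drop i.+1 a) mem_diffs_cat // last_take head_drop.
rewrite /splice !mem_diffs_cat ?map_nonnil // !diffs_addn last_map_nonnil //.
rewrite head_map_nonnil // head_cat_nonnil // last_take head_drop junction.
by rewrite -!orbA; do 2!congr (_ || _); rewrite [RHS]orbC -orbA.
Qed.

Lemma graceful_splice q p i a W : graceful q a -> i.+1 < q -> 0 < p ->
  size W = 2 * p ->
  (forall v, (v < p) || (p + q <= v < 2 * p + q) -> v \in W) ->
  (forall e, q < e < 2 * p + q -> e \in diffs W) ->
  absdiff (p + nth 0 a i) (head 0 W) = absdiff (nth 0 a i) (nth 0 a i.+1) ->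
  absdiff (last 0 W) (p + nth 0 a i.+1) = q ->
  graceful (2 * p + q) (splice p i a W).
Proof.
move=> ga i_lt p_gt0 size_W cover_W cover_dW junction_l junction_r.
have size_a := size_graceful ga.
have W_nil : W != [::] by rewrite -size_eq0 size_W; lia.
apply: graceful_cover.
- rewrite /splice !size_cat !size_map size_W size_drop size_takel size_a //; lia.
- move=> v v_lt; rewrite mem_splice (mem_graceful _ ga).
  by case: (boolP ((v < p) || (p + q <= v < 2 * p + q))) => [/cover_W -> | v_mid] //; lia.
move=> e e_range; rewrite mem_diffs_splice ?size_a // junction_r (mem_diffs_graceful _ ga).
case: (ltngtP e q) => [e_lt | q_lt | ->]; last by rewrite !orbT.
  by apply/orP; left; lia.
by rewrite cover_dW ?orbT //; lia.
Qed.

Lemma graceful_extend q a i x y p : graceful q a -> i.+1 < q ->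
  nth 0 a i = x -> nth 0 a i.+1 = y -> p = 2 * (y - x) -> x < y -> y < p ->
  exists b, [/\ graceful (2 * p + q) b, head 0 b = head 0 a + p & last 0 b = last 0 a + p].
Proof.
move=> ga i_lt a_i a_i1 p_eq x_lt y_lt.
have [w [gw head_w last_w alt_w]] := alt_graceful_exists y_lt.
have w_nil : w != [::] by apply: graceful_nonnil gw; lia.
have size_a := size_graceful ga.
exists (splice p i a (map (shift_high p q) w)); split.
- apply: graceful_splice => //; first lia.
  + by rewrite size_map (size_graceful gw).
  + by move=> v; rewrite (mem_shift_high _ _ gw).
  + by move=> e; rewrite (mem_diffs_shift_high _ _ gw alt_w).
  + by rewrite head_map_nonnil // head_w a_i a_i1 /shift_high y_lt /absdiff; lia.
  by rewrite last_map_nonnil // last_w a_i1 /shift_high ltnNge leq_addl /absdiff /=; lia.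
- by rewrite addnC head_splice // -size_eq0 size_a; lia.
by rewrite addnC last_splice ?size_a.
Qed.

Theorem theorem5p6 (q : nat) (a : seq nat) (i x y : nat) :
  0 < q ->
  graceful q a ->
  i.+1 < q ->
  ((x = nth 0 a i /\ y = nth 0 a i.+1) \/ (y = nth 0 a i /\ x = nth 0 a i.+1)) ->
  x < y -> y < 2 * (y - x) ->
  let p := 2 * (y - x) in
  exists b : seq nat,
    graceful (2 * p + q) b /\
    head 0 b = head 0 a + p /\
    last 0 b = last 0 a + p.
Proof.
move=> _ ga i_lt [[a_i a_i1] | [a_i a_i1]] x_lt y_lt p.
  have [b [gb head_b last_b]] :=
    graceful_extend ga i_lt (esym a_i) (esym a_i1) erefl x_lt y_lt.
  by exists b.
have size_a := size_graceful ga.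
have rev_at j : j < q -> nth 0 (rev a) (q - j.+1) = nth 0 a j.
  by move=> j_lt; rewrite nth_rev size_a; first congr (nth 0 a _); lia.
have rev_x : nth 0 (rev a) (q - i.+2) = x by rewrite rev_at.
have rev_y : nth 0 (rev a) (q - i.+2).+1 = y.
  by rewrite -subSn // rev_at // ltnW.
have i_rev : (q - i.+2).+1 < q by lia.
have [b [gb head_b last_b]] :=
  graceful_extend (graceful_rev ga) i_rev rev_x rev_y erefl x_lt y_lt.
exists (rev b); split; first exact: graceful_rev.
by rewrite head_rev last_rev last_b head_b head_rev last_rev.
Qed.
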